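(* Let $M=\{D(c_i;r_i)\subset\mathbb R^d: r_i>0,\ 1\le i\le m\}$ be a finite set of closed balls in $\mathbb R^d$ such that $D(c_i;r_i)\cap D(c_j;r_j)\ne\emptyset$ for every pair $i,j$. Then $$\bigcap_{i=1}^m D\!\left(c_i;\sqrt{\tfrac{2d}{d+1}}\,r_i\right)\neq\emptyset.$$
   Context: $D(c;r)=\{x\in\mathbb R^d:\|x-c\|\le r\}$ denotes the closed Euclidean ball. The radii $r_i$ may differ from one another. *)

From Stdlib Require Import Reals.
Open Scope R_scope.

(* A point of R^d is represented by a function nat -> R, of which only the
   coordinates 0 .. d-1 are relevant. *)
Definition point := nat -> R.

Fixpoint sqsum (d : nat) (v : point) : R :=
  match d with
  | O => 0
  | S k => sqsum k v + (v k) ^ 2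
  end.

Definition enorm (d : nat) (v : point) : R := sqrt (sqsum d v).

Definition in_ball (d : nat) (c : point) (r : R) (x : point) : Prop :=
  enorm d (fun k => x k - c k) <= r.

(* Let L = 2d/(d+1) and a_i = |c_i|^2 - L r_i^2.  The concave function
   Psi(mu) = sum_i mu_i a_i - |sum_i mu_i c_i|^2, the Lagrangian dual of minimising
   max_i (|x - c_i|^2 - L r_i^2) over x, attains its maximum on the probability simplex,
   and moving a maximizer along kernel directions of i |-> (1, c_i) (a Caratheodory
   argument) produces a maximizer mu supported on at most d+1 indices.  The optimality
   conditions give, for x = sum_i mu_i c_i,
     |x - c_i|^2 - L r_i^2 <= Psi(mu)
       = 1/2 sum_{i,j} mu_i mu_j |c_i - c_j|^2 - L sum_i mu_i r_i^2.
   Bounding |c_i - c_j| <= r_i + r_j for i <> j, the right side is at most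
   S + A^2 - 2Q - L S with S = sum mu_i r_i^2, A = sum mu_i r_i, Q = sum (mu_i r_i)^2,
   which is <= 0 since A^2 <= S (Jensen) and A^2 <= (d+1) Q (Cauchy-Schwarz over the
   support of mu). *)

From Stdlib Require Import Reals Lra Lia Classical.
From mathcomp Require all_boot all_order all_algebra all_classical all_reals all_analysis.
From mathcomp Require Rstruct Rstruct_topology.
Open Scope R_scope.

Fixpoint rsum (n : nat) (f : nat -> R) : R :=
  match n with O => 0 | S k => rsum k f + f k end.

Definition dot (d : nat) (u v : point) : R := rsum d (fun k => u k * v k).

Definition kron (i l : nat) : R := if Nat.eq_dec l i then 1 else 0.

Lemma rsum_ext n f g : (forall i, (i < n)%nat -> f i = g i) -> rsum n f = rsum n g.
Proof.
  induction n as [|n IH]; intros H; cbn [rsum]; [reflexivity|].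
  f_equal; [apply IH; intros i Hi|]; apply H; lia.
Qed.

Lemma rsum_add n f g : rsum n (fun i => f i + g i) = rsum n f + rsum n g.
Proof. induction n as [|n IH]; cbn [rsum]; [ring | rewrite IH; ring]. Qed.

Lemma rsum_sub n f g : rsum n (fun i => f i - g i) = rsum n f - rsum n g.
Proof. induction n as [|n IH]; cbn [rsum]; [ring | rewrite IH; ring]. Qed.

Lemma rsum_scal n a f : rsum n (fun i => a * f i) = a * rsum n f.
Proof. induction n as [|n IH]; cbn [rsum]; [ring | rewrite IH; ring]. Qed.

Lemma rsum_scal_r n f a : rsum n (fun i => f i * a) = rsum n f * a.
Proof. induction n as [|n IH]; cbn [rsum]; [ring | rewrite IH; ring]. Qed.

Lemma rsum_eq0 n f : (forall i, (i < n)%nat -> f i = 0) -> rsum n f = 0.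
Proof.
  intros H. transitivity (rsum n (fun _ => 0)); [now apply rsum_ext|].
  induction n as [|n IH]; cbn [rsum]; [ring | rewrite IH; [ring|intros; apply H; lia]].
Qed.

Lemma rsum_le n f g : (forall i, (i < n)%nat -> f i <= g i) -> rsum n f <= rsum n g.
Proof.
  induction n as [|n IH]; intros H; cbn [rsum]; [lra|].
  apply Rplus_le_compat; [apply IH; intros i Hi|]; apply H; lia.
Qed.

Lemma rsum_ge0 n f : (forall i, (i < n)%nat -> 0 <= f i) -> 0 <= rsum n f.
Proof. intros H. rewrite <- (rsum_eq0 n (fun _ => 0)) by reflexivity. now apply rsum_le. Qed.

Lemma rsum_swap n p (F : nat -> nat -> R) :
  rsum n (fun i => rsum p (fun j => F i j)) = rsum p (fun j => rsum n (fun i => F i j)).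
Proof.
  induction n as [|n IH]; cbn [rsum].
  - symmetry; now apply rsum_eq0.
  - now rewrite IH, <- rsum_add.
Qed.

Lemma rsum_kron n i f : (i < n)%nat -> rsum n (fun l => kron i l * f l) = f i.
Proof.
  induction n as [|n IH]; intros Hi; cbn [rsum]; [lia|].
  unfold kron at 2. destruct (Nat.eq_dec n i) as [->|Hne].
  - rewrite rsum_eq0; [ring|]. intros l Hl.
    unfold kron; destruct (Nat.eq_dec l i); [lia|ring].
  - rewrite IH; [ring|lia].
Qed.

Lemma sqsum_rsum d v : sqsum d v = rsum d (fun k => v k ^ 2).
Proof. induction d as [|d IH]; cbn [sqsum rsum]; [reflexivity | now rewrite IH]. Qed.

Lemma sqsum_ge0 d v : 0 <= sqsum d v.
Proof. rewrite sqsum_rsum. apply rsum_ge0; intros; apply pow2_ge_0. Qed.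

Lemma sqsum_ext d u v : (forall k, (k < d)%nat -> u k = v k) -> sqsum d u = sqsum d v.
Proof. intros H. rewrite !sqsum_rsum. apply rsum_ext; intros k Hk; now rewrite H. Qed.

Lemma sqsum_lincomb d s t u v :
  sqsum d (fun k => s * u k + t * v k) = s ^ 2 * sqsum d u + 2 * s * t * dot d u v + t ^ 2 * sqsum d v.
Proof. unfold dot; induction d as [|d IH]; cbn [sqsum rsum]; [ring | rewrite IH; ring]. Qed.

Lemma sqsum_sub d u v : sqsum d (fun k => u k - v k) = sqsum d u - 2 * dot d u v + sqsum d v.
Proof.
  rewrite (sqsum_ext d _ (fun k => 1 * u k + (-1) * v k)) by (intros; ring).
  rewrite sqsum_lincomb. ring.
Qed.

Lemma dot_diag d u : dot d u u = sqsum d u.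
Proof. rewrite sqsum_rsum. apply rsum_ext; intros; ring. Qed.

Lemma rsum_mul_dot n d (e : nat -> R) (x : point) (c : nat -> point) :
  rsum n (fun i => e i * dot d x (c i)) = dot d x (fun k => rsum n (fun i => e i * c i k)).
Proof.
  unfold dot.
  rewrite (rsum_ext n _ (fun i => rsum d (fun k => x k * (e i * c i k)))).
  - rewrite rsum_swap. apply rsum_ext; intros k _. apply rsum_scal.
  - intros i _. rewrite <- rsum_scal. apply rsum_ext; intros k _. ring.
Qed.

Fixpoint support_size (n : nat) (f : nat -> R) : nat :=
  match n with
  | O => O
  | S k => (support_size k f + if Req_EM_T (f k) 0 then 0 else 1)%nat
  end.

Lemma support_size_ext n f g : (forall i, (i < n)%nat -> f i = g i) ->
  support_size n f = support_size n g.
Proof.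
  induction n as [|n IH]; intros H; cbn [support_size]; [reflexivity|].
  rewrite IH, H; [reflexivity|lia|intros i Hi; apply H; lia].
Qed.

Lemma support_size_pos n f : (0 < support_size n f)%nat -> exists i, (i < n)%nat /\ f i <> 0.
Proof.
  induction n as [|n IH]; cbn [support_size]; intros H; [lia|].
  destruct (Req_EM_T (f n) 0) as [E|E].
  - destruct IH as [i [Hi Hf]]; [lia|]. exists i; split; [lia|exact Hf].
  - exists n; split; [lia|exact E].
Qed.

Lemma support_size_le n f g : (forall i, (i < n)%nat -> f i = 0 -> g i = 0) ->
  (support_size n g <= support_size n f)%nat.
Proof.
  induction n as [|n IH]; cbn [support_size]; intros H; [lia|].
  assert (support_size n g <= support_size n f)%nat by (apply IH; intros i Hi; apply H; lia).
  destruct (Req_EM_T (f n) 0) as [Ef|Ef]; destruct (Req_EM_T (g n) 0) as [Eg|Eg]; try lia.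
  exfalso; apply Eg, H; [lia|exact Ef].
Qed.

Lemma support_size_lt n f g i0 : (forall i, (i < n)%nat -> f i = 0 -> g i = 0) ->
  (i0 < n)%nat -> f i0 <> 0 -> g i0 = 0 -> (support_size n g < support_size n f)%nat.
Proof.
  induction n as [|n IH]; cbn [support_size]; intros H Hi0 Hf Hg; [lia|].
  assert (Hle : (support_size n g <= support_size n f)%nat)
    by (apply support_size_le; intros i Hi; apply H; lia).
  destruct (Nat.eq_dec i0 n) as [->|Hne].
  - destruct (Req_EM_T (f n) 0); [contradiction|]. destruct (Req_EM_T (g n) 0); [lia|contradiction].
  - assert (support_size n g < support_size n f)%nat
      by (apply IH; [intros i Hi; apply H; lia|lia|exact Hf|exact Hg]).
    destruct (Req_EM_T (f n) 0) as [Ef|Ef]; destruct (Req_EM_T (g n) 0) as [Eg|Eg]; try lia.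
    exfalso; apply Eg, H; [lia|exact Ef].
Qed.

Lemma support_size_remove n f i0 : (i0 < n)%nat -> f i0 <> 0 ->
  support_size n f = S (support_size n (fun i => if Nat.eq_dec i i0 then 0 else f i)).
Proof.
  induction n as [|n IH]; cbn [support_size]; intros Hi Hf; [lia|].
  destruct (Nat.eq_dec n i0) as [->|Hne].
  - rewrite (support_size_ext i0 (fun i => if Nat.eq_dec i i0 then 0 else f i) f)
      by (intros i Hi'; destruct (Nat.eq_dec i i0); [lia|reflexivity]).
    destruct (Req_EM_T (f i0) 0); [contradiction|]. destruct (Req_EM_T 0 0); [lia|contradiction].
  - rewrite IH by (lia || exact Hf). destruct (Req_EM_T (f n) 0); lia.
Qed.

Lemma rsum_sq_le_support n b :
  (rsum n b) ^ 2 <= INR (support_size n b) * rsum n (fun i => b i ^ 2).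
Proof.
  induction n as [|n IH]; cbn [rsum support_size]; [simpl; lra|].
  assert (HQ : 0 <= rsum n (fun i => b i ^ 2)) by (apply rsum_ge0; intros; apply pow2_ge_0).
  assert (HN : 0 <= INR (support_size n b)) by apply pos_INR.
  destruct (Req_EM_T (b n) 0) as [E|E].
  - rewrite E, Nat.add_0_r. lra.
  - rewrite plus_INR. simpl (INR 1).
    set (N := INR (support_size n b)) in *. set (B := rsum n b) in *.
    set (Q := rsum n (fun i => b i ^ 2)) in *.
    destruct (Req_dec N 0) as [N0|N0].
    + rewrite N0 in *. assert (B = 0) by nra. subst B. rewrite H. nra.
    + assert (N * ((N + 1) * (Q + b n ^ 2) - (B + b n) ^ 2) =
              (N + 1) * (N * Q - B ^ 2) + (B - N * b n) ^ 2) by ring.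
      assert (0 <= (N + 1) * (N * Q - B ^ 2)) by (apply Rmult_le_pos; lra).
      assert (0 <= (B - N * b n) ^ 2) by apply pow2_ge_0.
      assert (0 < N) by lra.
      nra.
Qed.

Lemma exists_kernel_vector (D : nat) : forall m (w : nat -> R) (u : nat -> point),
  (D < support_size m w)%nat ->
  exists al : nat -> R, (forall i, w i = 0 -> al i = 0) /\
    (exists i, (i < m)%nat /\ al i < 0) /\
    (forall k, (k < D)%nat -> rsum m (fun i => al i * u i k) = 0).
Proof.
  induction D as [|D IH]; intros m w u HD.
  - destruct (support_size_pos m w) as [i [Hi Hw]]; [lia|].
    exists (fun l => - kron i l). split; [|split].
    + intros l Hl. unfold kron. destruct (Nat.eq_dec l i) as [->|]; [contradiction|ring].
    + exists i. split; [exact Hi|]. unfold kron. destruct (Nat.eq_dec i i); [lra|congruence].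
    + intros k Hk; lia.
  - destruct (classic (exists i0, (i0 < m)%nat /\ w i0 <> 0 /\ u i0 D <> 0))
      as [[i0 [Hi0 [Hw0 Hu0]]]|Hno].
    + (* Gaussian elimination of coordinate D against the vector u i0 *)
      set (w' := fun i => if Nat.eq_dec i i0 then 0 else w i).
      set (u' := fun i k => u i k - u i D / u i0 D * u i0 k).
      destruct (IH m w' u') as [be [Hbw [[j [Hj Hbj]] Hbk]]].
      { rewrite (support_size_remove m w i0) in HD by assumption. unfold w'. lia. }
      assert (Hbe0 : be i0 = 0)
        by (apply Hbw; unfold w'; destruct (Nat.eq_dec i0 i0); [reflexivity|congruence]).
      set (A := - rsum m (fun i => be i * u i D) / u i0 D).
      assert (Hsum : forall k, rsum m (fun i => (be i + A * kron i0 i) * u i k) =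
                               rsum m (fun i => be i * u i k) + A * u i0 k).
      { intros k. rewrite <- (rsum_kron m i0 (fun i => u i k)) by exact Hi0.
        rewrite <- rsum_scal, <- rsum_add. apply rsum_ext; intros; ring. }
      exists (fun i => be i + A * kron i0 i). split; [|split].
      * intros i Hi. assert (i <> i0) by (intros ->; contradiction).
        rewrite Hbw by (unfold w'; destruct (Nat.eq_dec i i0); [contradiction|exact Hi]).
        unfold kron; destruct (Nat.eq_dec i i0); [contradiction|ring].
      * exists j. split; [exact Hj|]. assert (j <> i0) by (intros ->; lra).
        unfold kron; destruct (Nat.eq_dec j i0); [contradiction|lra].
      * intros k Hk. rewrite Hsum.
        destruct (Nat.eq_dec k D) as [->|Hne]; [unfold A; field; exact Hu0|].
        specialize (Hbk k ltac:(lia)). unfold u' in Hbk.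
        rewrite (rsum_ext m _ (fun i => be i * u i k - u i0 k / u i0 D * (be i * u i D)))
          in Hbk by (intros; field; exact Hu0).
        rewrite rsum_sub, rsum_scal in Hbk. unfold A. unfold Rdiv in *. lra.
    + destruct (IH m w u) as [al [Hw [Hneg Hk]]]; [lia|].
      exists al. split; [exact Hw|split; [exact Hneg|]].
      intros k Hk'. destruct (Nat.eq_dec k D) as [->|]; [|apply Hk; lia].
      apply rsum_eq0. intros i Hi. destruct (Req_EM_T (w i) 0) as [E|E]; [rewrite (Hw i E); ring|].
      assert (u i D = 0) as -> by (apply NNPP; intro; apply Hno; exists i; auto). ring.
Qed.

Lemma exists_argmin n (P : nat -> Prop) (f : nat -> R) :
  (exists i, (i < n)%nat /\ P i) ->
  exists i0, (i0 < n)%nat /\ P i0 /\ forall j, (j < n)%nat -> P j -> f i0 <= f j.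
Proof.
  induction n as [|n IH]; intros [i [Hi HP]]; [lia|].
  destruct (classic (exists i, (i < n)%nat /\ P i)) as [Hex|Hno].
  - destruct (IH Hex) as [i0 [Hi0 [HP0 Hmin]]].
    destruct (classic (P n /\ f n < f i0)) as [[HPn Hlt]|Hnot].
    + exists n. split; [lia|split; [exact HPn|]]. intros j Hj HPj.
      destruct (Nat.eq_dec j n) as [->|]; [lra|]. specialize (Hmin j ltac:(lia) HPj). lra.
    + exists i0. split; [lia|split; [exact HP0|]]. intros j Hj HPj.
      destruct (Nat.eq_dec j n) as [->|]; [|apply Hmin; [lia|exact HPj]].
      apply Rnot_lt_le; intro Hlt; apply Hnot; auto.
  - assert (i = n) as ->
      by (destruct (Nat.eq_dec i n); [assumption|exfalso; apply Hno; exists i; split; [lia|exact HP]]).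
    exists n. split; [lia|split; [exact HP|]]. intros j Hj HPj.
    destruct (Nat.eq_dec j n) as [->|]; [lra|]. exfalso; apply Hno; exists j; split; [lia|exact HPj].
Qed.

Lemma ratio_test m (mu be : nat -> R) : (forall i, (i < m)%nat -> 0 <= mu i) ->
  (exists i, (i < m)%nat /\ be i < 0) ->
  exists i0, (i0 < m)%nat /\ be i0 < 0 /\
    forall j, (j < m)%nat -> 0 <= mu j + mu i0 / - be i0 * be j.
Proof.
  intros Hmu Hneg.
  destruct (exists_argmin m (fun i => be i < 0) (fun i => mu i / - be i) Hneg)
    as [i0 [Hi0 [Hb0 Hmin]]].
  exists i0. split; [exact Hi0|split; [exact Hb0|]]. intros j Hj.
  assert (Hs : 0 <= mu i0 / - be i0)
    by (unfold Rdiv; apply Rmult_le_pos; [apply Hmu; exact Hi0|apply Rlt_le, Rinv_0_lt_compat; lra]).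
  destruct (Rlt_or_le (be j) 0) as [Hbj|Hbj].
  - specialize (Hmin j Hj Hbj). cbv beta in Hmin.
    apply Rmult_le_compat_r with (r := - be j) in Hmin; [|lra].
    replace (mu j / - be j * - be j) with (mu j) in Hmin by (field; lra). lra.
  - specialize (Hmu j Hj). nra.
Qed.

Lemma nonpos_of_small_quadratic (T q p : R) : 0 < T -> 0 <= q ->
  (forall t, 0 < t <= T -> t * p - t ^ 2 * q <= 0) -> p <= 0.
Proof.
  intros HT Hq H. apply Rnot_lt_le. intro Hp.
  set (t := Rmin T (p / (q + 1))).
  assert (Ht : 0 < t) by (apply Rmin_pos; [lra| apply Rdiv_lt_0_compat; lra]).
  assert (Htq : t * (q + 1) <= p).
  { assert (Htp : t <= p / (q + 1)) by apply Rmin_r.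
    apply Rmult_le_compat_r with (r := q + 1) in Htp; [|lra].
    replace (p / (q + 1) * (q + 1)) with p in Htp by (field; lra). exact Htp. }
  specialize (H t (conj Ht (Rmin_l _ _))). nra.
Qed.

Definition simplex (m : nat) (mu : nat -> R) : Prop :=
  (forall i, (i < m)%nat -> 0 <= mu i) /\ rsum m mu = 1.

Lemma simplex_shift m mu e t : simplex m mu -> rsum m e = 0 ->
  (forall i, (i < m)%nat -> 0 <= mu i + t * e i) -> simplex m (fun i => mu i + t * e i).
Proof. intros [_ H1] He Hpos. split; [exact Hpos|]. rewrite rsum_add, rsum_scal, H1, He. ring. Qed.

Section DualProblem.
Variables (m d : nat) (c : nat -> point) (a : nat -> R).

Definition bary (mu : nat -> R) : point := fun k => rsum m (fun i => mu i * c i k).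

Definition dual_obj (mu : nat -> R) : R := rsum m (fun i => mu i * a i) - sqsum d (bary mu).

Definition dual_grad (mu : nat -> R) (i : nat) : R := a i - 2 * dot d (bary mu) (c i).

Definition dual_maximizer (mu : nat -> R) : Prop :=
  simplex m mu /\ forall nu, simplex m nu -> dual_obj nu <= dual_obj mu.

Lemma rsum_mul_dual_grad mu e :
  rsum m (fun i => e i * dual_grad mu i) =
  rsum m (fun i => e i * a i) - 2 * dot d (bary mu) (bary e).
Proof.
  unfold dual_grad.
  rewrite (rsum_ext m _ (fun i => e i * a i - 2 * (e i * dot d (bary mu) (c i)))) by (intros; ring).
  now rewrite rsum_sub, rsum_scal, rsum_mul_dot.
Qed.

Lemma dual_obj_shift mu e t :
  dual_obj (fun i => mu i + t * e i) =
  dual_obj mu + t * rsum m (fun i => e i * dual_grad mu i) - t ^ 2 * sqsum d (bary e).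
Proof.
  unfold dual_obj. rewrite rsum_mul_dual_grad.
  rewrite (sqsum_ext d (bary (fun i => mu i + t * e i)) (fun k => 1 * bary mu k + t * bary e k)).
  2:{ intros k _. unfold bary. rewrite <- !rsum_scal, <- rsum_add. apply rsum_ext; intros; ring. }
  rewrite sqsum_lincomb.
  rewrite (rsum_ext m _ (fun i => mu i * a i + t * (e i * a i))) by (intros; ring).
  rewrite rsum_add, rsum_scal. ring.
Qed.

Lemma dual_maximizer_grad_le mu i j : dual_maximizer mu ->
  (i < m)%nat -> (j < m)%nat -> 0 < mu j -> dual_grad mu i <= dual_grad mu j.
Proof.
  intros [Hmu Hmax] Hi Hj Hpos.
  destruct (Nat.eq_dec i j) as [->|Hij]; [lra|].
  set (e := fun l => kron i l - kron j l).
  assert (He : forall f, rsum m (fun l => e l * f l) = f i - f j).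
  { intros f. unfold e.
    rewrite (rsum_ext m _ (fun l => kron i l * f l - kron j l * f l)) by (intros; ring).
    now rewrite rsum_sub, !rsum_kron. }
  apply Rminus_le, (nonpos_of_small_quadratic (mu j) (sqsum d (bary e))).
  - exact Hpos.
  - apply sqsum_ge0.
  - intros t Ht.
    assert (Hsimp : simplex m (fun l => mu l + t * e l)).
    { apply simplex_shift; [exact Hmu| |].
      - rewrite (rsum_ext m e (fun l => e l * 1)) by (intros; ring). rewrite He. ring.
      - intros l Hl. destruct Hmu as [Hnn _]. specialize (Hnn l Hl).
        unfold e, kron. destruct (Nat.eq_dec l i); destruct (Nat.eq_dec l j); subst; lra || lia. }
    specialize (Hmax _ Hsimp). rewrite dual_obj_shift, He in Hmax. lra.
Qed.

Lemma dual_maximizer_grad_eq mu i j : dual_maximizer mu ->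
  (i < m)%nat -> (j < m)%nat -> mu i <> 0 -> mu j <> 0 -> dual_grad mu i = dual_grad mu j.
Proof.
  intros Hmax Hi Hj Hmi Hmj. pose proof Hmax as [[Hnn _] _].
  specialize (Hnn i Hi) as Hni. specialize (Hnn j Hj) as Hnj.
  apply Rle_antisym; apply dual_maximizer_grad_le; auto; lra.
Qed.

Lemma dual_maximizer_grad_bound mu i : dual_maximizer mu -> (i < m)%nat ->
  dual_grad mu i + sqsum d (bary mu) <= dual_obj mu.
Proof.
  intros Hmax Hi. pose proof Hmax as [[Hnn Hsum] _].
  assert (Hmean : dual_grad mu i <= rsum m (fun j => mu j * dual_grad mu i)).
  { rewrite (rsum_ext m _ (fun j => dual_grad mu i * mu j)) by (intros; ring).
    rewrite rsum_scal, Hsum. lra. }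
  assert (Hle : rsum m (fun j => mu j * dual_grad mu i) <= rsum m (fun j => mu j * dual_grad mu j)).
  { apply rsum_le. intros j Hj. specialize (Hnn j Hj).
    destruct (Req_EM_T (mu j) 0) as [E|E]; [rewrite E; lra|].
    apply Rmult_le_compat_l; [exact Hnn|]. apply dual_maximizer_grad_le; auto; lra. }
  rewrite rsum_mul_dual_grad, dot_diag in Hle. unfold dual_obj. lra.
Qed.

(* Along a direction in the kernel of [i |-> (1, c i)] supported on supp mu, the objective
   has no linear part (the gradient is constant on the support) and no quadratic part. *)
Lemma dual_obj_kernel_shift mu be s : dual_maximizer mu ->
  (forall i, (i < m)%nat -> mu i = 0 -> be i = 0) ->
  rsum m be = 0 -> (forall k, (k < d)%nat -> bary be k = 0) ->
  dual_obj (fun i => mu i + s * be i) = dual_obj mu.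
Proof.
  intros Hmax Hsupp Hsum Hbary. pose proof Hmax as [[_ Hmu1] _].
  destruct (classic (exists i0, (i0 < m)%nat /\ mu i0 <> 0)) as [[i0 [Hi0 Hmu0]]|Hno].
  2:{ exfalso. rewrite rsum_eq0 in Hmu1; [lra|].
      intros i Hi. apply NNPP; intro; apply Hno; exists i; auto. }
  assert (Hgrad : rsum m (fun i => be i * dual_grad mu i) = 0).
  { rewrite (rsum_ext m _ (fun i => dual_grad mu i0 * be i)).
    - now rewrite rsum_scal, Hsum, Rmult_0_r.
    - intros i Hi. destruct (Req_EM_T (mu i) 0) as [E|E]; [rewrite (Hsupp i Hi E); ring|].
      rewrite (dual_maximizer_grad_eq mu i i0) by assumption. ring. }
  rewrite dual_obj_shift, Hgrad, sqsum_rsum, (rsum_eq0 d)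
    by (intros k Hk; rewrite Hbary by exact Hk; ring).
  ring.
Qed.

Lemma dual_maximizer_reduce mu : dual_maximizer mu -> (d + 1 < support_size m mu)%nat ->
  exists nu, dual_maximizer nu /\ (support_size m nu < support_size m mu)%nat.
Proof.
  intros Hmax Hsize. pose proof Hmax as [[Hnn _] Hopt].
  set (u := fun i k => if Nat.ltb k d then c i k else 1).
  destruct (exists_kernel_vector (d + 1) m mu u Hsize) as [be [Hsupp [Hneg Hker]]].
  assert (Hbsum : rsum m be = 0).
  { rewrite <- (Hker d) by lia. apply rsum_ext; intros i _. unfold u. rewrite Nat.ltb_irrefl. ring. }
  assert (Hbary : forall k, (k < d)%nat -> bary be k = 0).
  { intros k Hk. rewrite <- (Hker k) by lia. apply rsum_ext; intros i _. unfold u.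
    apply Nat.ltb_lt in Hk. now rewrite Hk. }
  destruct (ratio_test m mu be Hnn Hneg) as [i0 [Hi0 [Hb0 Hnu]]].
  set (s := mu i0 / - be i0).
  exists (fun i => mu i + s * be i). split.
  - assert (Hsimp : simplex m (fun i => mu i + s * be i))
      by (apply simplex_shift; [exact (proj1 Hmax)|exact Hbsum|exact Hnu]).
    split; [exact Hsimp|]. intros nu Hnu'.
    rewrite dual_obj_kernel_shift by (assumption || (intros i _; apply Hsupp)).
    apply Hopt; exact Hnu'.
  - apply (support_size_lt m mu _ i0).
    + intros i Hi E. rewrite E, (Hsupp i E). ring.
    + exact Hi0.
    + intro E. rewrite (Hsupp i0 E) in Hb0. lra.
    + unfold s. field. lra.
Qed.

End DualProblem.

Module DualMaximizerExistence.
Import all_boot all_order all_algebra all_classical all_reals all_analysis.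
Import Rstruct Rstruct_topology.
Import Order.TTheory GRing.Theory Num.Theory.
Import numFieldNormedType.Exports.
Local Open Scope classical_set_scope.
Local Open Scope ring_scope.

Lemma rsumE n f : rsum n f = \sum_(i < n) f i.
Proof.
elim: n => [|n IH] /=; first by rewrite big_ord0.
by rewrite big_ord_recr /= IH.
Qed.

Lemma continuous_sum m (I : Type) (s : seq I) (G : I -> 'rV[R]_m -> R) :
  (forall i, continuous (G i)) -> continuous (fun w => \sum_(i <- s) G i w).
Proof.
move=> HG; elim: s => [|x s IH].
  have -> : (fun w => \sum_(i <- [::]) G i w) = (fun=> 0).
    by apply: funext => w; rewrite big_nil.
  exact: cst_continuous.
have -> : (fun w => \sum_(i <- x :: s) G i w) = G x \+ (fun w => \sum_(i <- s) G i w).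
  by apply: funext => w; rewrite big_cons.
by move=> w; apply: (@continuousD R R^o); [exact: HG | exact: IH].
Qed.

Section Compactness.
(* [nat -> point] is spelled out: mathcomp's [point] shadows it here. *)
Variables (m d : nat) (c : nat -> nat -> R) (a : nat -> R).

Definition objective (w : 'rV[R]_m) : R :=
  \sum_(i < m) w ord0 i * a i - \sum_(k < d) (\sum_(i < m) w ord0 i * c i k) ^+ 2.

Definition simplex_set : set 'rV[R]_m :=
  [set w | (forall i, 0 <= w ord0 i) /\ \sum_(i < m) w ord0 i = 1].

Lemma continuous_objective : continuous objective.
Proof.
have lin k : continuous (fun w : 'rV[R]_m => \sum_(i < m) w ord0 i * c i k).
  apply: continuous_sum => i w; apply: (@continuousM R); first exact: coord_continuous.
  exact: cst_continuous.
move=> w; apply: (@continuousB R R^o).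
  apply: continuous_sum => i v; apply: (@continuousM R); first exact: coord_continuous.
  exact: cst_continuous.
by apply: continuous_sum => k v; apply: (@continuousM R); apply: lin.
Qed.

Lemma compact_simplex_set : compact simplex_set.
Proof.
have closed_simplex : closed simplex_set.
  have -> : simplex_set =
      \bigcap_(i in [set: 'I_m]) ((fun w : 'rV[R]_m => w ord0 i) @^-1` [set x | 0 <= x])
      `&` ((fun w : 'rV[R]_m => \sum_(i < m) w ord0 i) @^-1` [set 1]).
    apply/seteqP; split => w /=.
      by move=> [H1 H2]; split => // i _; exact: H1.
    by move=> [H1 H2]; split => // i; exact: H1.
  apply: closedI.
    apply: closed_bigI => i _; apply: preimage_closed; last exact: closed_ge.
    by move=> w _; exact: coord_continuous.
  apply: preimage_closed; last exact: closed_eq.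
  by move=> w _; apply: continuous_sum => i; exact: coord_continuous.
apply: (subclosed_compact closed_simplex
  (@rV_compact _ _ (fun=> `[(0:R), 1]%classic) (fun _ => @segment_compact _ 0 1))).
move=> w [H1 H2] i /=; rewrite in_itv /= H1 /= -H2.
by rewrite (bigD1 i) //= lerDl; apply: sumr_ge0 => j _; exact: H1.
Qed.

Lemma objective_attains_max : (0 < m)%N ->
  exists2 v, v \in simplex_set & forall w, w \in simplex_set -> objective w <= objective v.
Proof.
move=> m_gt0; apply: EVT_max_rV; last first.
- by move=> w; apply: continuous_subspaceT; exact: continuous_objective.
- exact: compact_simplex_set.
exists (\row_(i < m) (if (i : nat) == 0%N then 1 else 0)); split.
  by move=> i; rewrite mxE; case: ifP.
rewrite (bigD1 (Ordinal m_gt0)) //= mxE eqxx big1 ?addr0 // => i /negbTE.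
by rewrite mxE; case: ifP => // /eqP Hi; rewrite -val_eqE /= Hi.
Qed.

End Compactness.

Lemma exists_dual_maximizer m d c a : (0 < m)%coq_nat -> exists mu, dual_maximizer m d c a mu.
Proof.
case: m => [/Nat.lt_irrefl []|n _].
have [v v_simplex v_max] := objective_attains_max n.+1 d c a (ltn0Sn n).
pose coords (w : 'rV[R]_n.+1) i := w ord0 (inord i).
have objE w : dual_obj n.+1 d c a (coords w) = objective n.+1 d c a w.
  rewrite /dual_obj /objective sqsum_rsum !rsumE RminusE; congr (_ - _).
    by apply: eq_bigr => i _; rewrite /coords inord_val.
  apply: eq_bigr => k _; rewrite RpowE /bary rsumE; congr (_ ^+ _).
  by apply: eq_bigr => i _; rewrite /coords inord_val.
have simplexE w : w \in simplex_set n.+1 <-> simplex n.+1 (coords w).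
  rewrite inE /simplex_set /simplex rsumE /=; split.
    move=> [H1 H2]; split; last first.
      by apply: etrans H2; apply: eq_bigr => i _; rewrite /coords inord_val.
    by move=> i _; apply/RleP; exact: H1.
  move=> [H1 H2]; split.
    by move=> i; have /RleP := H1 i (ssrnat.ltP (ltn_ord i)); rewrite /coords inord_val.
  by apply: etrans H2; apply: eq_bigr => i _; rewrite /coords inord_val.
exists (coords v); split; first exact/simplexE.
move=> nu nu_simplex.
pose w := \row_(i < n.+1) nu i.
have wE i : (i < n.+1)%coq_nat -> coords w i = nu i.
  by move=> /ssrnat.ltP Hi; rewrite /coords mxE inordK.
have -> : dual_obj n.+1 d c a nu = dual_obj n.+1 d c a (coords w).
  rewrite /dual_obj /bary; congr (_ - _).
    by apply: rsum_ext => i Hi; rewrite wE.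
  by apply: sqsum_ext => k _; apply: rsum_ext => i Hi; rewrite wE.
rewrite !objE; apply/RleP; apply: v_max; apply/simplexE.
split; last by rewrite -nu_simplex.2; apply: rsum_ext => i Hi; rewrite wE.
by move=> i Hi; rewrite wE //; exact: nu_simplex.1.
Qed.

End DualMaximizerExistence.

Lemma exists_sparse_dual_maximizer m d c a : (0 < m)%nat ->
  exists mu, dual_maximizer m d c a mu /\ (support_size m mu <= d + 1)%nat.
Proof.
  intros Hm. destruct (DualMaximizerExistence.exists_dual_maximizer m d c a Hm) as [mu0 Hmu0].
  remember (support_size m mu0) as n eqn:En. revert mu0 Hmu0 En.
  induction n as [n IH] using Wf_nat.lt_wf_ind. intros mu Hmu ->.
  destruct (Compare_dec.le_lt_dec (support_size m mu) (d + 1)) as [Hle|Hlt]; [now exists mu|].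
  destruct (dual_maximizer_reduce m d c a mu Hmu Hlt) as [nu [Hnu Hlt']].
  exact (IH _ Hlt' nu Hnu eq_refl).
Qed.

Lemma rsum_pairwise_sq m (mu p : nat -> R) : rsum m mu = 1 ->
  rsum m (fun i => rsum m (fun j => mu i * mu j * (p i - p j) ^ 2)) =
  2 * (rsum m (fun i => mu i * p i ^ 2) - (rsum m (fun i => mu i * p i)) ^ 2).
Proof.
  intros H1.
  rewrite (rsum_ext m _ (fun i => (mu i * p i ^ 2) * rsum m mu
      - (2 * (mu i * p i)) * rsum m (fun j => mu j * p j)
      + mu i * rsum m (fun j => mu j * p j ^ 2))).
  2:{ intros i _. rewrite <- !rsum_scal, <- rsum_sub, <- rsum_add. apply rsum_ext; intros; ring. }
  rewrite rsum_add, rsum_sub, !rsum_scal_r, H1, rsum_scal. ring.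
Qed.

Lemma weighted_mean_sq_le m mu p : simplex m mu ->
  (rsum m (fun i => mu i * p i)) ^ 2 <= rsum m (fun i => mu i * p i ^ 2).
Proof.
  intros [Hnn Hsum].
  assert (H : 0 <= rsum m (fun i => rsum m (fun j => mu i * mu j * (p i - p j) ^ 2))).
  { apply rsum_ge0; intros i Hi; apply rsum_ge0; intros j Hj.
    apply Rmult_le_pos; [apply Rmult_le_pos; auto|apply pow2_ge_0]. }
  rewrite rsum_pairwise_sq in H by exact Hsum. lra.
Qed.

Lemma weighted_variance_pairwise m d c mu : rsum m mu = 1 ->
  rsum m (fun i => mu i * sqsum d (c i)) - sqsum d (bary m c mu) =
  / 2 * rsum m (fun i => rsum m (fun j => mu i * mu j * sqsum d (fun k => c i k - c j k))).
Proof.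
  intros Hsum.
  rewrite (rsum_ext m (fun i => mu i * sqsum d (c i)) (fun i => rsum d (fun k => mu i * c i k ^ 2)))
    by (intros i _; rewrite sqsum_rsum, rsum_scal; reflexivity).
  rewrite (rsum_ext m (fun i => rsum m (fun j => mu i * mu j * sqsum d (fun k => c i k - c j k)))
             (fun i => rsum d (fun k => rsum m (fun j => mu i * mu j * (c i k - c j k) ^ 2)))).
  2:{ intros i _. rewrite <- rsum_swap. apply rsum_ext; intros j _.
      rewrite sqsum_rsum, <- rsum_scal. reflexivity. }
  rewrite (rsum_swap m d (fun i k => mu i * c i k ^ 2)),
    (rsum_swap m d (fun i k => rsum m (fun j => mu i * mu j * (c i k - c j k) ^ 2))), sqsum_rsum.
  rewrite (rsum_ext d (fun k => rsum m (fun i => rsum m (fun j => mu i * mu j * (c i k - c j k) ^ 2)))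
     (fun k => 2 * (rsum m (fun i => mu i * c i k ^ 2) - (rsum m (fun i => mu i * c i k)) ^ 2)))
    by (intros k _; apply rsum_pairwise_sq; exact Hsum).
  rewrite rsum_scal, rsum_sub. unfold bary. field.
Qed.

Lemma rsum_pairwise_sqsum_le m d c r mu : simplex m mu ->
  (forall i j, (i < m)%nat -> (j < m)%nat ->
     sqsum d (fun k => c i k - c j k) <= (r i + r j) ^ 2) ->
  rsum m (fun i => rsum m (fun j => mu i * mu j * sqsum d (fun k => c i k - c j k))) <=
  2 * rsum m (fun i => mu i * r i ^ 2) + 2 * (rsum m (fun i => mu i * r i)) ^ 2
  - 4 * rsum m (fun i => (mu i * r i) ^ 2).
Proof.
  intros [Hnn Hsum] Hpair.
  (* on the diagonal, |c_i - c_i| = 0 improves the bound (r_i + r_i)^2 by (2 r_i)^2 *)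
  apply Rle_trans with (rsum m (fun i => rsum m (fun j =>
      mu i * mu j * (r i + r j) ^ 2 - kron i j * (4 * (mu i * r i) ^ 2)))).
  - apply rsum_le; intros i Hi; apply rsum_le; intros j Hj.
    assert (0 <= mu i * mu j) by (apply Rmult_le_pos; auto).
    unfold kron. destruct (Nat.eq_dec j i) as [->|].
    + rewrite sqsum_rsum, rsum_eq0 by (intros; ring). nra.
    + specialize (Hpair i j Hi Hj). nra.
  - right.
    rewrite (rsum_ext m _ (fun i => (mu i * r i ^ 2) * rsum m mu
        + (2 * (mu i * r i)) * rsum m (fun j => mu j * r j)
        + mu i * rsum m (fun j => mu j * r j ^ 2) - 4 * (mu i * r i) ^ 2)).
    2:{ intros i Hi. rewrite rsum_sub, (rsum_kron m i (fun _ => 4 * (mu i * r i) ^ 2)) by exact Hi.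
        rewrite <- !rsum_scal, <- !rsum_add. f_equal. apply rsum_ext; intros; ring. }
    rewrite rsum_sub, !rsum_add, !rsum_scal_r, !rsum_scal, Hsum. ring.
Qed.

Lemma jung_arith (n S A Q : R) : 1 <= n -> 0 <= Q -> A ^ 2 <= S -> A ^ 2 <= (n + 1) * Q ->
  S + A ^ 2 - 2 * Q <= 2 * n / (n + 1) * S.
Proof.
  intros Hn HQ HS HA.
  apply Rmult_le_reg_l with (n + 1); [lra|].
  replace ((n + 1) * (2 * n / (n + 1) * S)) with (2 * n * S) by (field; lra).
  nra.
Qed.

Lemma jung_dual_obj_nonpos m d c r mu : (1 <= d)%nat -> simplex m mu ->
  (support_size m mu <= d + 1)%nat ->
  (forall i j, (i < m)%nat -> (j < m)%nat ->
     sqsum d (fun k => c i k - c j k) <= (r i + r j) ^ 2) ->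
  dual_obj m d c (fun i => sqsum d (c i) - 2 * INR d / (INR d + 1) * r i ^ 2) mu <= 0.
Proof.
  intros Hd Hmu Hsize Hpair. pose proof Hmu as [_ Hsum].
  pose proof (rsum_pairwise_sqsum_le m d c r mu Hmu Hpair) as Hpw.
  pose proof (weighted_mean_sq_le m mu r Hmu) as HAS.
  pose proof (rsum_sq_le_support m (fun i => mu i * r i)) as HAQ. cbv beta in HAQ.
  assert (Hsupp : INR (support_size m (fun i => mu i * r i)) <= INR d + 1).
  { rewrite <- S_INR. apply le_INR.
    enough (support_size m (fun i => (mu i * r i)%R) <= support_size m mu)%nat by lia.
    apply support_size_le. intros i _ E. rewrite E. ring. }
  assert (HQ : 0 <= rsum m (fun i => (mu i * r i) ^ 2)) by (apply rsum_ge0; intros; apply pow2_ge_0).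
  assert (Hobj : dual_obj m d c (fun i => sqsum d (c i) - 2 * INR d / (INR d + 1) * r i ^ 2) mu =
    (rsum m (fun i => mu i * sqsum d (c i)) - sqsum d (bary m c mu))
    - 2 * INR d / (INR d + 1) * rsum m (fun i => mu i * r i ^ 2)).
  { unfold dual_obj.
    rewrite (rsum_ext m _ (fun i => mu i * sqsum d (c i)
               - 2 * INR d / (INR d + 1) * (mu i * r i ^ 2))) by (intros; ring).
    rewrite rsum_sub, rsum_scal. ring. }
  rewrite Hobj, weighted_variance_pairwise by exact Hsum.
  set (S := rsum m (fun i => mu i * r i ^ 2)) in *.
  set (A := rsum m (fun i => mu i * r i)) in *.
  set (Q := rsum m (fun i => (mu i * r i) ^ 2)) in *.
  assert (HA : A ^ 2 <= (INR d + 1) * Q).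
  { apply Rle_trans with (1 := HAQ). apply Rmult_le_compat_r; assumption. }
  pose proof (jung_arith (INR d) S A Q (le_INR 1 d Hd) HQ HAS HA).
  lra.
Qed.

Lemma in_ball_iff d c r x : 0 <= r ->
  (in_ball d c r x <-> sqsum d (fun k => x k - c k) <= r ^ 2).
Proof.
  intros Hr. unfold in_ball, enorm.
  pose proof (sqsum_ge0 d (fun k => x k - c k)) as H0.
  split; intros H.
  - rewrite <- (pow2_sqrt (sqsum d (fun k => x k - c k))) by exact H0.
    apply pow_incr. split; [apply sqrt_pos|exact H].
  - rewrite <- (sqrt_pow2 r) by exact Hr. apply sqrt_le_1_alt. exact H.
Qed.

Lemma sqsum_sub_le d u v p q : 0 < p -> 0 < q ->
  sqsum d u <= p ^ 2 -> sqsum d v <= q ^ 2 ->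
  sqsum d (fun k => u k - v k) <= (p + q) ^ 2.
Proof.
  intros Hp Hq Hu Hv. rewrite sqsum_sub.
  (* |q u + p v|^2 >= 0 bounds the cross term: - <u, v> <= p q *)
  pose proof (sqsum_ge0 d (fun k => q * u k + p * v k)) as H.
  rewrite sqsum_lincomb in H.
  assert (0 < p * q) by nra.
  assert (- dot d u v <= p * q) by nra.
  nra.
Qed.

Lemma balls_meet_center_dist d ci cj ri rj : 0 < ri -> 0 < rj ->
  (exists x, in_ball d ci ri x /\ in_ball d cj rj x) ->
  sqsum d (fun k => ci k - cj k) <= (ri + rj) ^ 2.
Proof.
  intros Hi Hj [x [Hxi Hxj]].
  apply in_ball_iff in Hxi; [|lra]. apply in_ball_iff in Hxj; [|lra].
  rewrite (sqsum_ext d _ (fun k => (x k - cj k) - (x k - ci k))) by (intros; ring).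
  replace (ri + rj) with (rj + ri) by ring.
  now apply sqsum_sub_le.
Qed.

Lemma in_ball_sqrt_scale d c r L x : 0 <= L -> 0 <= r ->
  sqsum d (fun k => x k - c k) <= L * r ^ 2 -> in_ball d c (sqrt L * r) x.
Proof.
  intros HL Hr H. apply in_ball_iff; [apply Rmult_le_pos; [apply sqrt_pos|exact Hr]|].
  now rewrite Rpow_mult_distr, pow2_sqrt.
Qed.

Theorem lemma2p2 (d m : nat) (c : nat -> point) (r : nat -> R)
  (hr : forall i, (i < m)%nat -> 0 < r i)
  (hpair : forall i j, (i < m)%nat -> (j < m)%nat ->
      exists x : point, in_ball d (c i) (r i) x /\ in_ball d (c j) (r j) x) :
  exists x : point, forall i, (i < m)%nat ->
    in_ball d (c i) (sqrt (2 * INR d / (INR d + 1)) * r i) x.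
Proof.
  set (L := 2 * INR d / (INR d + 1)).
  assert (HL : 0 <= L)
    by (unfold L, Rdiv; pose proof (pos_INR d);
        apply Rmult_le_pos; [lra|apply Rlt_le, Rinv_0_lt_compat; lra]).
  destruct (Nat.eq_dec d 0) as [->|Hd].
  { exists (fun _ => 0). intros i Hi. specialize (hr i Hi).
    apply in_ball_sqrt_scale; [exact HL|lra|]. cbn [sqsum].
    apply Rmult_le_pos; [exact HL|apply pow2_ge_0]. }
  destruct (Nat.eq_dec m 0) as [->|Hm]; [exists (fun _ => 0); intros i Hi; lia|].
  assert (Hpair : forall i j, (i < m)%nat -> (j < m)%nat ->
                   sqsum d (fun k => c i k - c j k) <= (r i + r j) ^ 2)
    by (intros i j Hi Hj; apply balls_meet_center_dist; auto).
  destruct (exists_sparse_dual_maximizer m d c (fun i => sqsum d (c i) - L * r i ^ 2))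
    as [mu [Hmax Hsize]]; [lia|].
  pose proof (jung_dual_obj_nonpos m d c r mu ltac:(lia) (proj1 Hmax) Hsize Hpair) as Hobj.
  exists (bary m c mu). intros i Hi. specialize (hr i Hi).
  apply in_ball_sqrt_scale; [exact HL|lra|].
  pose proof (dual_maximizer_grad_bound m d c _ mu i Hmax Hi) as Hgrad.
  unfold dual_grad in Hgrad. cbv beta in Hgrad. fold L in Hobj.
  rewrite sqsum_sub. lra.
Qed.
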